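(* Let $q$ be a prime power and let $C\subseteq\mathrm{GF}(q^m)^n$ be a (linear or nonlinear) code with $n\le m$, $|C|=q^{mk}$ for an integer $1\le k\le n$, and minimum rank distance $d_{\mathrm R}=n-k+1$. Let $\mathcal K$ be any elementary linear subspace of $\mathrm{GF}(q^m)^n$ of dimension $k$ and $\bar{\mathcal K}$ any elementary linear subspace of dimension $n-k$ with $\mathcal K\oplus\bar{\mathcal K}=\mathrm{GF}(q^m)^n$. Then for every $\mathbf w\in\mathcal K$ there exists a unique codeword $\mathbf c\in C$ with $\mathbf c_{\mathcal K}=\mathbf w$, where $\mathbf c_{\mathcal K}$ denotes the projection of $\mathbf c$ onto $\mathcal K$ along $\bar{\mathcal K}$.
   Context: For $\mathbf x=(x_0,\dots,x_{n-1})\in\mathrm{GF}(q^m)^n$, $\mathrm{rk}(\mathbf x)$ is the dimension over $\mathrm{GF}(q)$ of the $\mathrm{GF}(q)$-span of $x_0,\dots,x_{n-1}$; the minimum rank distance of $C$ is the minimum of $\mathrm{rk}(\mathbf c-\mathbf d)$ over distinct codewords. A linear subspace of the $\mathrm{GF}(q^m)$-vector space $\mathrm{GF}(q^m)^n$ is elementary if it has a basis consisting of vectors in $\mathrm{GF}(q)^n$. The projection of $\mathbf x$ onto $\mathcal K$ along $\bar{\mathcal K}$ is the unique $\mathbf x_{\mathcal K}\in\mathcal K$ with $\mathbf x-\mathbf x_{\mathcal K}\in\bar{\mathcal K}$. *)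

(* GF(q) = F : finFieldType (q = #|F|, automatically a prime power);
   GF(q^m) = L : fieldExtType F with m = \dim {:L} over F. *)
From HB Require Import structures.
From mathcomp Require Import all_boot all_order all_algebra all_field.
Set Implicit Arguments. Unset Strict Implicit. Unset Printing Implicit Defensive.
Import GRing.Theory.
Local Open Scope ring_scope.

Definition rk (F : fieldType) (L : fieldExtType F) (n : nat) (x : 'rV[L]_n) : nat :=
  \dim <<[seq x ord0 i | i <- enum 'I_n]>>%VS.

Definition min_rank_dist (F : fieldType) (L : fieldExtType F) (n : nat)
    (C : seq 'rV[L]_n) (d : nat) : Prop :=
  (forall c e, c \in C -> e \in C -> c != e -> (d <= rk (c - e))%N) /\
  (exists c e, [/\ c \in C, e \in C, c != e & rk (c - e) = d]).

(* An L-linear subspace of L^n (row space of the square matrix K) is elementary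
   if it has a basis of vectors in F^n. *)
Definition elementary (F : fieldType) (L : fieldExtType F) (n : nat) (K : 'M[L]_n) : Prop :=
  exists r (B : 'M[F]_(r, n)),
    row_free (map_mx (in_alg L) B) /\ (K == map_mx (in_alg L) B)%MS.

From HB Require Import structures.
From mathcomp Require Import all_boot all_order all_algebra all_field.
Set Implicit Arguments.
Unset Strict Implicit.
Unset Printing Implicit Defensive.

Import GRing.Theory.
Local Open Scope ring_scope.

(* Two codewords with the same projection onto K differ by a vector of the
   elementary space Kbar; such a vector is an L-combination of n - k vectors
   of F^n, so its entries span an F-space of dimension at most n - k < d_R.
   Hence projection is injective on C, and since C has as many elements as
   K ~ L^k, it is onto K. *)

Section ElementaryRank.

Variables (F : fieldType) (L : fieldExtType F) (n : nat).

Lemma rk_mul_in_alg_mx r (a : 'rV[L]_r) (B : 'M[F]_(r, n)) :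
  (rk (a *m map_mx (in_alg L) B) <= r)%N.
Proof.
set span_a := <<[seq a ord0 i | i <- enum 'I_r]>>%VS.
have sub_span_a : (<<[seq (a *m map_mx (in_alg L) B) ord0 j | j <- enum 'I_n]>>
                    <= span_a)%VS.
  apply/span_subvP => _ /mapP[j _ ->].
  rewrite mxE; apply: rpred_sum => i _; rewrite mxE /= mulr_algr.
  by apply: rpredZ; apply: memv_span; apply: map_f; rewrite mem_enum.
apply: leq_trans (dimvS sub_span_a) (leq_trans (dim_span _) _).
by rewrite size_map size_enum_ord.
Qed.

Lemma rk_sub_elementary (K : 'M[L]_n) (x : 'rV[L]_n) :
  elementary K -> (x <= K)%MS -> (rk x <= \rank K)%N.
Proof.
move=> [r [B [/eqP freeB /eqmxP eqKB]]]; rewrite !eqKB freeB.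
by case/submxP => a ->; apply: rk_mul_in_alg_mx.
Qed.

End ElementaryRank.

Lemma proj_mx_inj_in_code (F : fieldType) (L : fieldExtType F) (n d : nat)
    (C : seq 'rV[L]_n) (K Kbar : 'M[L]_n) :
  min_rank_dist C d -> elementary Kbar -> (\rank Kbar < d)%N ->
  (K + Kbar :=: 1%:M)%MS ->
  {in C &, injective (fun c => c *m proj_mx K Kbar)}.
Proof.
move=> [dist_ge _] eKbar rKbar_lt fullKK c e cC eC eq_proj.
apply/eqP; apply: contraT => /(dist_ge c e cC eC) d_le_rk.
have diff_Kbar : (c - e <= Kbar)%MS.
  have := proj_mx_compl_sub (_ : (c - e <= K + Kbar)%MS).
  by rewrite mulmxBl eq_proj subrr subr0; apply; rewrite fullKK submx1.
have := leq_trans d_le_rk (rk_sub_elementary eKbar diff_Kbar).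
by rewrite leqNgt rKbar_lt.
Qed.

Lemma card_onto_in (T : finType) (X : eqType) (s : seq X) (f : X -> T) :
  uniq s -> {in s &, injective f} -> (#|T| <= size s)%N ->
  forall t, exists2 x, x \in s & f x = t.
Proof.
move=> uniq_s inj_f card_le t.
have uniq_fs : uniq (map f s) by rewrite map_inj_in_uniq.
have sub_enum : {subset map f s <= enum T} by move=> y _; rewrite mem_enum.
have size_le : (size (enum T) <= size (map f s))%N by rewrite -cardE size_map.
have [_ /(_ t)] := uniq_min_size uniq_fs sub_enum size_le.
by rewrite mem_enum => /mapP[x xs ->]; exists x.
Qed.

Section RowSpaceCount.

Variables (F : finFieldType) (L : fieldExtType F) (n : nat).

Lemma card_finvect_fieldExt : #|finvect_type L| = (#|F| ^ \dim {:L})%N.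
Proof. by rewrite -(card_vspacef (Vector.class (finvect_type L))) card_vspace. Qed.

Lemma row_space_onto_in (X : eqType) (s : seq X) (f : X -> 'rV[L]_n)
    (K : 'M[L]_n) :
  uniq s -> {in s &, injective f} -> {in s, forall x, (f x <= K)%MS} ->
  (#|F| ^ (\dim {:L} * \rank K) <= size s)%N ->
  forall w, (w <= K)%MS -> exists2 x, x \in s & f x = w.
Proof.
move=> uniq_s inj_f fK card_le w wK.
pose coord (v : 'rV[L]_n) : 'rV[finvect_type L]_(\rank K) :=
  v *m pinvmx (row_base K).
have coordK v : (v <= K)%MS -> (coord v : 'rV[L]_(\rank K)) *m row_base K = v.
  by move=> vK; rewrite mulmxKpV // eq_row_base.
have inj_coord : {in s &, injective (coord \o f)}.
  move=> x y xs ys /= eq_xy; apply: inj_f => //.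
  by rewrite -[f x]coordK ?fK // eq_xy coordK ?fK.
have card_rV :
    #|{: 'rV[finvect_type L]_(\rank K)}| = (#|F| ^ (\dim {:L} * \rank K))%N.
  by rewrite card_mx card_finvect_fieldExt mul1n expnM.
rewrite -card_rV in card_le.
have [x xs /= coord_fx] := card_onto_in uniq_s inj_coord card_le (coord w).
by exists x => //; rewrite -(coordK _ (fK x xs)) coord_fx coordK.
Qed.

End RowSpaceCount.

Theorem lemma5 (F : finFieldType) (L : fieldExtType F) (n k : nat)
    (C : seq 'rV[L]_n) (K Kbar : 'M[L]_n) :
  (n <= \dim {:L})%N ->
  (1 <= k <= n)%N ->
  uniq C ->
  size C = (#|F| ^ (\dim {:L} * k))%N ->
  min_rank_dist C (n - k + 1) ->
  elementary K -> \rank K = k ->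
  elementary Kbar -> \rank Kbar = (n - k)%N ->
  mxdirect (K + Kbar) -> (K + Kbar :=: 1%:M)%MS ->
  forall w : 'rV[L]_n, (w <= K)%MS ->
    exists! c : 'rV[L]_n, c \in C /\ c *m proj_mx K Kbar = w.
Proof.
move=> _ _ uniq_C size_C dist_C _ rK eKbar rKbar _ fullKK w wK.
have rKbar_lt : (\rank Kbar < n - k + 1)%N by rewrite rKbar addn1.
have inj_proj := proj_mx_inj_in_code dist_C eKbar rKbar_lt fullKK.
have proj_sub : {in C, forall c, (c *m proj_mx K Kbar <= K)%MS}.
  by move=> c _; apply: proj_mx_sub.
have card_le : (#|F| ^ (\dim {:L} * \rank K) <= size C)%N by rewrite rK size_C.
have [c cC proj_c] := row_space_onto_in uniq_C inj_proj proj_sub card_le wK.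
exists c; split=> // e [eC proj_e].
by apply: inj_proj => //; rewrite proj_c proj_e.
Qed.
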